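(* Let $Y\subseteq\Omega$, $L\in\mathcal{I}^{\mathbf{c}}(Y)$ and $e\in\max(Y)-L$, and let $k=|\langle\{e\}\rangle_Y|$. Then $$\pi(Y,L)-\pi(Y,L\cup\{e\})=(\eta_{(e)}+1_K)\Big(\prod_{i\in\langle\{e\}\rangle_Y-\{e\}}\tau_{(i)}\Big)x^{k}\,\pi(Y-\langle\{e\}\rangle_Y,L).$$
   Context: $\Omega$ is a finite set and $\mathbf{P}=(\Omega,\preccurlyeq_{\mathbf{P}})$ a poset. For $Y\subseteq\Omega$: $\max(Y)$ is the set of maximal elements of $Y$ w.r.t. $\preccurlyeq_{\mathbf{P}}$; $\mathcal{I}(Y)$ is the set of down-closed subsets of $Y$ (induced order); $\mathcal{I}^{\mathbf{c}}(Y)$ is the set of up-closed subsets of $Y$; for $A\subseteq Y$, $\langle A\rangle_Y=\{y\in Y:\exists a\in A, y\preccurlyeq_{\mathbf{P}}a\}$. $K$ is a commutative ring, $\tau,\eta\in K^{\Omega}$. For $D,I\subseteq\Omega$, $\varphi(D,I)=(-1)^{|I\cap D|}\big(\prod_{i\in I-\max(I)}\tau_{(i)}\big)\big(\prod_{i\in\max(I)-D}\eta_{(i)}\big)$ if $I\cap D\subseteq\max(I)$, and $0$ otherwise; for $D\subseteq Y\subseteq\Omega$, $\pi(Y,D)=\sum_{I\in\mathcal{I}(Y)}\varphi(D,I)x^{|I|}\in K[x]$. *)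

From HB Require Import structures.
From mathcomp Require Import all_boot all_order all_algebra.
Set Implicit Arguments. Unset Strict Implicit. Unset Printing Implicit Defensive.
Import Order.TTheory GRing.Theory.
Local Open Scope order_scope.

Section PosetPoly.
Variables (d : Order.disp_t) (Omega : finPOrderType d).

Definition maxel (Y : {set Omega}) : {set Omega} :=
  [set y in Y | [forall z in Y, ~~ (y < z)]].

Definition downclosed (Y I : {set Omega}) : bool :=
  (I \subset Y) && [forall x in I, forall y in Y, (y <= x) ==> (y \in I)].

Definition upclosed (Y L : {set Omega}) : bool :=
  (L \subset Y) && [forall x in L, forall y in Y, (x <= y) ==> (y \in L)].

Definition gen (Y A : {set Omega}) : {set Omega} :=
  [set y in Y | [exists a in A, y <= a]].

Local Open Scope ring_scope.
Variable K : comNzRingType.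

Definition phi (tau eta : Omega -> K) (D I : {set Omega}) : K :=
  if I :&: D \subset maxel I then
    (-1) ^+ #|I :&: D| * (\prod_(i in I :\: maxel I) tau i)
      * (\prod_(i in maxel I :\: D) eta i)
  else 0.

Definition piY (tau eta : Omega -> K) (Y D : {set Omega}) : {poly K} :=
  \sum_(I : {set Omega} | downclosed Y I) phi tau eta D I *: 'X^#|I|.

End PosetPoly.

(* Since phi D I only depends on I :&: D, the down-sets of Y avoiding e contribute
   equally to pi(Y, L) and pi(Y, e |: L).  A down-set containing e contains
   G = <{e}>_Y, hence is J :|: G for a unique down-set J of Y :\: G; in it e is
   the only new maximal element and the rest of G is non-maximal.  So e adds the
   factor eta e (e outside L) or -1 (e in e |: L), G :\ e adds the product of
   tau, and the size grows by #|G|; the difference of the two factors gives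
   eta e + 1. *)
From mathcomp Require Import all_boot all_order all_algebra.
From mathcomp Require Import ring.
Import Order.TTheory GRing.Theory.
Local Open Scope ring_scope.

Set Implicit Arguments. Unset Strict Implicit. Unset Printing Implicit Defensive.

Section Downsets.
Local Open Scope order_scope.
Variables (d : Order.disp_t) (Omega : finPOrderType d).
Implicit Types (Y A G I J L : {set Omega}) (a e x y : Omega).

Lemma maxelP Y x :
  reflect (x \in Y /\ forall z, z \in Y -> ~~ (x < z)) (x \in maxel Y).
Proof.
rewrite inE; apply: (iffP andP) => -[xY h]; split=> //.
  by move=> z zY; move/forall_inP: h; apply.
by apply/forall_inP.
Qed.

Lemma maxel_subset Y : maxel Y \subset Y.
Proof. by apply/subsetP=> x /maxelP[]. Qed.

Lemma downclosedP Y I :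
  reflect (I \subset Y /\ forall x y, x \in I -> y \in Y -> y <= x -> y \in I)
          (downclosed Y I).
Proof.
apply: (iffP andP) => -[IY h]; split=> //.
  by move=> x y xI yY; move/forall_inP: h => /(_ x xI) /forall_inP /(_ y yY) /implyP.
by apply/forall_inP=> x xI; apply/forall_inP=> y yY; apply/implyP; apply: h.
Qed.

Lemma upclosedP Y L :
  reflect (L \subset Y /\ forall x y, x \in L -> y \in Y -> x <= y -> y \in L)
          (upclosed Y L).
Proof.
apply: (iffP andP) => -[LY h]; split=> //.
  by move=> x y xL yY; move/forall_inP: h => /(_ x xL) /forall_inP /(_ y yY) /implyP.
by apply/forall_inP=> x xL; apply/forall_inP=> y yY; apply/implyP; apply: h.
Qed.

Lemma mem_gen1 Y a x : (x \in gen Y [set a]) = (x \in Y) && (x <= a).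
Proof.
rewrite inE; congr (_ && _); apply/exists_inP/idP => [[b /set1P -> //]|xa].
by exists a; rewrite ?set11.
Qed.

Lemma downclosed_gen Y A : downclosed Y (gen Y A).
Proof.
apply/downclosedP; split; first by apply/subsetP=> x; rewrite inE => /andP[].
move=> x y; rewrite !inE => /andP[_ /exists_inP[a aA xa]] yY yx.
by rewrite yY; apply/exists_inP; exists a; last exact: le_trans yx xa.
Qed.

Lemma gen_subset Y A I : downclosed Y I -> A \subset I -> gen Y A \subset I.
Proof.
move=> /downclosedP[_ dI] AI; apply/subsetP=> y.
by rewrite inE => /andP[yY /exists_inP[a aA ya]]; apply: dI (subsetP AI a aA) yY ya.
Qed.

Lemma gen1_subset Y I e :
  downclosed Y I -> e \in Y -> (gen Y [set e] \subset I) = (e \in I).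
Proof.
move=> dI eY; apply/idP/idP => [/subsetP|eI]; last by rewrite gen_subset ?sub1set.
by apply; rewrite mem_gen1 eY lexx.
Qed.

Lemma downclosedD Y G I : downclosed Y I -> downclosed (Y :\: G) (I :\: G).
Proof.
move=> /downclosedP[IY dI]; apply/downclosedP; split; first exact: setSD.
move=> x y; rewrite !inE => /andP[_ xI] /andP[yG yY] yx.
by rewrite yG (dI x y).
Qed.

Lemma downclosedU Y G J :
  downclosed Y G -> downclosed (Y :\: G) J -> downclosed Y (J :|: G).
Proof.
move=> /downclosedP[GY dG] /downclosedP[JYG dJ]; apply/downclosedP; split.
  by rewrite subUset GY (subset_trans JYG (subsetDl _ _)).
move=> x y; rewrite !inE => /orP[xJ|xG] yY yx; last by rewrite (dG x y) ?orbT.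
by case yG: (y \in G); rewrite ?orbT // (dJ x y) // inE yG.
Qed.

Lemma big_downclosed_supset (V : nmodType) Y G (F : {set Omega} -> V) :
  downclosed Y G ->
  \sum_(I | downclosed Y I && (G \subset I)) F I =
    \sum_(J | downclosed (Y :\: G) J) F (J :|: G).
Proof.
move=> dG; rewrite (reindex_onto (fun J => J :|: G) (fun I => I :\: G)) /=.
  apply: eq_bigl => J; apply/idP/idP => [/andP[/andP[dJG _] /eqP <-]|dJ].
    exact: downclosedD.
  have /setDidPl JG : [disjoint J & G].
    by case/downclosedP: dJ; rewrite subsetD => /andP[].
  by rewrite downclosedU // subsetUr setDUl setDv setU0 JG eqxx.
by move=> I /andP[_ GI]; rewrite -{2}(setIidPr GI) setUC setID.
Qed.

Lemma maxel_setU_gen1 Y J e :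
  e \in maxel Y -> J \subset Y :\: gen Y [set e] ->
  maxel (J :|: gen Y [set e]) = e |: maxel J.
Proof.
move=> /maxelP[eY emax] /subsetP JYG.
have JY z : z \in J -> z \in Y by move/JYG; rewrite inE => /andP[].
have eG : e \in gen Y [set e] by rewrite mem_gen1 eY lexx.
apply/setP=> x; rewrite in_setU1; apply/maxelP/orP.
  case; rewrite in_setU => /orP[xJ|xG] xmax.
    by right; apply/maxelP; split=> // z zJ; apply: xmax; rewrite in_setU zJ.
  left; move: xG; rewrite mem_gen1 => /andP[_ xe].
  by have := xmax e; rewrite in_setU eG orbT lt_neqAle xe andbT negbK; apply.
case=> [/eqP ->|/maxelP[xJ xmax]].
  split; first by rewrite in_setU eG orbT.
  by move=> z; rewrite in_setU mem_gen1 => /orP[/JY|/andP[+ _]]; apply: emax.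
split=> [|z]; first by rewrite in_setU xJ.
rewrite in_setU mem_gen1 => /orP[/xmax //|/andP[_ ze]].
apply/negP=> /ltW xz; move: (JYG x xJ).
by rewrite inE mem_gen1 (JY x xJ) (le_trans xz ze).
Qed.

Lemma gen1_disjoint_upclosed Y L e :
  upclosed Y L -> e \in Y -> e \notin L -> [disjoint gen Y [set e] & L].
Proof.
move=> /upclosedP[_ uL] eY eL; apply/pred0P=> x /=.
by rewrite mem_gen1; apply/negP=> /andP[/andP[_ xe] xL]; rewrite (uL x e) in eL.
Qed.

End Downsets.

Section Phi.
Variables (d : Order.disp_t) (Omega : finPOrderType d) (K : comNzRingType).
Variables (tau eta : Omega -> K).
Implicit Types (D G I J : {set Omega}) (e : Omega).

Lemma eq_phi D D' I : I :&: D = I :&: D' -> phi tau eta D I = phi tau eta D' I.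
Proof.
move=> ID; rewrite /phi ID; congr (if _ then _ * _ * _ else _).
apply: eq_bigl => x; rewrite !in_setD; case xM: (x \in maxel I); rewrite ?andbF //.
have xI : x \in I by apply: subsetP (maxel_subset I) x xM.
by move/setP: ID => /(_ x); rewrite !inE xI /= => ->.
Qed.

Lemma phi_setU1_notin D I e : e \notin I -> phi tau eta (e |: D) I = phi tau eta D I.
Proof.
move=> eI; apply: eq_phi; apply/setP=> x; rewrite !inE.
by case: eqP => // ->; rewrite (negbTE eI).
Qed.

Lemma phi_setU_max D J G e :
  [disjoint J & G] -> e \in G -> maxel (J :|: G) = e |: maxel J ->
  G :&: D \subset [set e] ->
  phi tau eta D (J :|: G) =
    (if e \in D then -1 else eta e) * \prod_(i in G :\ e) tau i * phi tau eta D J.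
Proof.
move=> JG eG maxJG GDe.
have eJ : e \notin J by rewrite (disjointFl JG eG).
have eM : e \notin maxel J by apply: contra eJ; apply/subsetP/maxel_subset.
have eJD : e \notin J :&: D by rewrite inE (negbTE eJ).
have sub_maxJ : (J :&: D \subset e |: maxel J) = (J :&: D \subset maxel J).
  have /setDidPl JDe : [disjoint J :&: D & [set e]] by rewrite disjoint_sym disjoints1.
  by rewrite -subDset JDe.
have notJ_max x : x \in G -> x \notin maxel J.
  by move=> xG; apply: contraFN (disjointFl JG xG); apply/subsetP/maxel_subset.
have nonmax : (J :|: G) :\: (e |: maxel J) = (J :\: maxel J) :|: (G :\ e).
  apply/setP=> x; rewrite !(in_setD, in_setU, in_set1).
  case: (eqVneq x e) => [->|_] /=; first by rewrite (negbTE eJ) andbF.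
  by case xG: (x \in G); rewrite ?orbT ?andbT ?(notJ_max x xG) ?orbF.
have prod_nonmax : \prod_(i in (J :\: maxel J) :|: (G :\ e)) tau i =
    (\prod_(i in J :\: maxel J) tau i) * \prod_(i in G :\ e) tau i.
  rewrite -bigU /=; first by apply: eq_bigl => x; rewrite !inE.
  exact: disjointWl (subsetDl _ _) (disjointWr (subsetDl _ _) JG).
have JGD : (J :|: G) :&: D = ([set e] :&: D) :|: (J :&: D).
  rewrite setIUl setUC; congr (_ :|: _); apply/setP=> x; rewrite !inE.
  case: eqVneq => [->|xe]; first by rewrite eG.
  by apply/negP=> xGD; have := subsetP GDe x; rewrite !inE xGD (negbTE xe) => /(_ isT).
rewrite /phi maxJG nonmax prod_nonmax JGD setDUl.
case eD: (e \in D).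
  have -> : [set e] :&: D = [set e] by apply/setIidPl; rewrite sub1set.
  have -> : [set e] :\: D = set0 by apply/eqP; rewrite setD_eq0 sub1set.
  rewrite set0U subUset sub1set setU11 sub_maxJ cardsU1 eJD.
  by case: (J :&: D \subset maxel J); [rewrite exprS; ring | rewrite !mulr0].
have /setDidPl -> : [disjoint [set e] & D] by rewrite disjoints1 eD.
have -> : [set e] :&: D = set0 by apply: disjoint_setI0; rewrite disjoints1 eD.
rewrite set0U big_setU1 /=; last by rewrite in_setD (negbTE eM) andbF.
rewrite sub_maxJ.
by case: (J :&: D \subset maxel J); [ring | rewrite !mulr0].
Qed.

End Phi.

Theorem proposition3p1 (d : Order.disp_t) (Omega : finPOrderType d)
  (K : comNzRingType) (tau eta : Omega -> K)
  (Y L : {set Omega}) (e : Omega) :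
  upclosed Y L -> e \in maxel Y -> e \notin L ->
  piY tau eta Y L - piY tau eta Y (e |: L) =
    ((eta e + 1) * \prod_(i in gen Y [set e] :\ e) tau i) *:
      ('X^#|gen Y [set e]| * piY tau eta (Y :\: gen Y [set e]) L).
Proof.
move=> upL emax eL; have eY : e \in Y := subsetP (maxel_subset Y) e emax.
set G := gen Y [set e]; have GL : G :&: L = set0.
  exact/disjoint_setI0/gen1_disjoint_upclosed.
rewrite /piY -sumrB (bigID (fun I : {set Omega} => e \in I)) /=.
rewrite [X in _ + X]big1 => [|I /andP[_ eI]]; last by rewrite phi_setU1_notin ?subrr.
rewrite (eq_bigl (fun I => downclosed Y I && (G \subset I))); last first.
  by move=> I; case dI: (downclosed Y I); rewrite /= ?gen1_subset.
rewrite addr0 (big_downclosed_supset _ (downclosed_gen Y [set e])).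
rewrite mulr_sumr scaler_sumr.
apply: eq_bigr => J /downclosedP[JYG _].
have JG : [disjoint J & G] by move: JYG; rewrite subsetD => /andP[].
have maxJG := maxel_setU_gen1 emax JYG.
have eG : e \in G by rewrite mem_gen1 eY lexx.
have GLe : G :&: L \subset [set e] by rewrite GL sub0set.
have GeLe : G :&: (e |: L) \subset [set e] by rewrite setIUr GL setU0 subsetIr.
rewrite -scalerBl !(phi_setU_max tau eta JG eG maxJG) //.
rewrite phi_setU1_notin ?(disjointFl JG eG) // setU11 (negbTE eL).
rewrite cardsU (disjoint_setI0 JG) cards0 subn0 exprD -scalerAr scalerA mulrC.
by congr (_ *: _); ring.
Qed.
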